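(* In the two-tier residency matching game described in the context with any list length $K\ge 1$ and $v\ge e/(e-1)$, under the large market approximation, the social welfare of the symmetric Nash equilibrium is at least half of the OPTIMUM welfare $2(v+r)n$; i.e., the loss of efficiency of equilibrium compared to OPTIMUM is at most a factor of $2$.
   Context: Model: there are $n$ high-tier and $rn$ low-tier doctors ($r>0$), and $n$ high-tier and $rn$ low-tier hospitals, each with one position. Every hospital prefers every high doctor to every low doctor and every doctor prefers every high hospital to every low hospital; within a tier, preferences are independent uniformly random permutations. Each doctor submits a ranked list of exactly $K$ hospitals: a strategy $(k,K-k)$ lists his $k$ most preferred high hospitals followed by his $K-k$ most preferred low hospitals. Hospitals submit full true rankings; doctor-proposing deferred acceptance is run. Values: a doctor gets $v>1$ if matched to a high hospital, $1$ if matched to a low one, $0$ if unmatched; a hospital gets $v$ if matched to a high doctor, $1$ if matched to a low doctor, $0$ if unfilled. Social welfare is the sum of the values of all doctors and hospitals. Large market approximation: $n\to\infty$ with $r,K,v$ fixed, and each application to a hospital is accepted independently with a probability determined by the aggregate strategy profile through fixed-point equations (expected matched doctors = expected hospitals receiving at least one admissible application; a hospital receiving on average $\lambda$ applications gets none with probability $e^{-\lambda}$; low doctors' applications to hospitals already taken by high doctors are rejected). Equilibrium: symmetric Nash equilibrium, all doctors of a tier using the same (possibly mixed) strategy, each maximizing expected value given the acceptance probabilities. OPTIMUM: the welfare $2(v+r)n$ of the matching in which every high doctor is matched to a high hospital and every low doctor to a low hospital (the deferred acceptance outcome with full lists). *)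

From Stdlib Require Import Reals.
Open Scope R_scope.

Fixpoint geom (q : R) (m : nat) : R :=
  match m with
  | O => 0
  | S m' => geom q m' + q ^ m'
  end.

Definition sumK (K : nat) (f : nat -> R) : R := sum_f_R0 f K.

(* probability that at least one of m applications (each accepted
   independently with probability a) is accepted *)
Definition pmatch (a : R) (m : nat) : R := 1 - (1 - a) ^ m.

(* expected number of applications actually sent when going down a list of m
   hospitals, stopping at the first acceptance *)
Definition napps (a : R) (m : nat) : R := geom (1 - a) m.

(* A mixed strategy: x k = probability of strategy (k, K-k), k = 0..K. *)
Definition mixed (K : nat) (x : nat -> R) : Prop :=
  (forall k, (k <= K)%nat -> 0 <= x k) /\ sumK K x = 1.

Section Model.
Variables (K : nat) (r v : R) (x y : nat -> R) (aHH aHL aLH aLL : R).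
(* x : mixed strategy of high doctors, y : of low doctors.
   aHH / aHL : acceptance prob. of a high doctor's application to a high / low
   hospital; aLH / aLL : same for a low doctor. *)

(* Prob. that a high (resp. low) doctor using (k, K-k) matches to a high /
   low hospital. *)
Definition pHH (k : nat) : R := pmatch aHH k.
Definition pHL (k : nat) : R := (1 - aHH) ^ k * pmatch aHL (K - k).
Definition pLH (k : nat) : R := pmatch aLH k.
Definition pLL (k : nat) : R := (1 - aLH) ^ k * pmatch aLL (K - k).

Definition utilH (k : nat) : R := v * pHH k + 1 * pHL k.
Definition utilL (k : nat) : R := v * pLH k + 1 * pLL k.

(* Expected numbers of matched pairs, divided by n
   (there are n high doctors and r n low doctors). *)
Definition MHH : R := sumK K (fun k => x k * pHH k).
Definition MHL : R := sumK K (fun k => x k * pHL k).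
Definition MLH : R := r * sumK K (fun k => y k * pLH k).
Definition MLL : R := r * sumK K (fun k => y k * pLL k).

(* Average number of applications received per hospital. *)
(* high doctors -> each of the n high hospitals *)
Definition lamHH : R := sumK K (fun k => x k * napps aHH k).
(* high doctors -> each of the r n low hospitals *)
Definition lamHL : R :=
  sumK K (fun k => x k * ((1 - aHH) ^ k * napps aHL (K - k))) / r.
(* low doctors -> each high hospital (applications are spread uniformly, so a
   high hospital not taken by high doctors receives this many on average) *)
Definition muH : R := r * sumK K (fun k => y k * napps aLH k) / 1.
(* low doctors -> each low hospital *)
Definition muL : R :=
  r * sumK K (fun k => y k * ((1 - aLH) ^ k * napps aLL (K - k))) / r.

(* Fixed-point equations of the large market approximation:
   expected matched doctors = expected hospitals receiving at least one
   admissible application (Poisson: none with probability exp(-lambda));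
   low doctors' applications to hospitals taken by high doctors are
   rejected, so only the fraction exp(-lamHH) (resp. exp(-lamHL)) of high
   (resp. low) hospitals is available to low doctors.
   When an acceptance probability is not determined because no application
   is ever sent (zero load), it is fixed to its limit value (1 for high
   doctors, the fraction of hospitals not taken by high doctors for low
   doctors). *)
Definition fixed_point : Prop :=
  (0 <= aHH <= 1 /\ 0 <= aHL <= 1 /\ 0 <= aLH <= 1 /\ 0 <= aLL <= 1) /\
  (MHH = 1 - exp (- lamHH) /\
   MHL = r * (1 - exp (- lamHL)) /\
   MLH = exp (- lamHH) * (1 - exp (- muH)) /\
   MLL = r * (exp (- lamHL) * (1 - exp (- muL)))) /\
  ((lamHH = 0 -> aHH = 1) /\
   (lamHL = 0 -> aHL = 1) /\
   (muH = 0 -> aLH = exp (- lamHH)) /\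
   (muL = 0 -> aLL = exp (- lamHL))).

Definition sym_equilibrium : Prop :=
  mixed K x /\ mixed K y /\ fixed_point /\
  (forall k, (k <= K)%nat -> 0 < x k ->
     forall k', (k' <= K)%nat -> utilH k' <= utilH k) /\
  (forall k, (k <= K)%nat -> 0 < y k ->
     forall k', (k' <= K)%nat -> utilL k' <= utilL k).

Definition doctors_welfare : R := v * MHH + 1 * MHL + v * MLH + 1 * MLL.
Definition hospitals_welfare : R := v * MHH + 1 * MLH + v * MHL + 1 * MLL.
Definition social_welfare : R := doctors_welfare + hospitals_welfare.

End Model.

Definition optimum (r v : R) : R := 2 * (v + r).

From Stdlib Require Import Reals Lra Lia Psatz.
Open Scope R_scope.

(* Each doctor can deviate to a one-tier list: a high doctor listing only high
   hospitals gets at least [v * aHH], a low doctor listing only low hospitals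
   gets at least [aLL], so in equilibrium the doctors' welfare is at least
   [v * aHH + r * aLL].  Since [1 - exp (-l) >= l * exp (-l)], the fixed-point
   equations force every acceptance probability to be at least the fraction
   of hospitals left without any application, i.e. [aHH >= exp (-lamHH)] and
   [aLL >= exp (-lamHL) * exp (-muL)].  These are exactly the masses of high
   and low hospitals that the hospitals' side of the welfare misses, so the
   two sides together add up to at least [v + r]. *)

Lemma geom_mul_one_sub (q : R) (m : nat) : (1 - q) * geom q m = 1 - q ^ m.
Proof. induction m as [|m IH]; simpl; [ring|]. rewrite Rmult_plus_distr_l, IH. ring. Qed.

Lemma pmatch_napps (a : R) (m : nat) : pmatch a m = a * napps a m.
Proof. unfold pmatch, napps. rewrite <- geom_mul_one_sub. ring. Qed.

Lemma geom_nonneg (q : R) (m : nat) : 0 <= q -> 0 <= geom q m.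
Proof.
  intros Hq. induction m as [|m IH]; simpl; [lra|].
  pose proof (pow_le q m Hq). lra.
Qed.

Lemma napps_nonneg (a : R) (m : nat) : 0 <= a <= 1 -> 0 <= napps a m.
Proof. intros Ha. apply geom_nonneg. lra. Qed.

Lemma pmatch_nonneg (a : R) (m : nat) : 0 <= a <= 1 -> 0 <= pmatch a m.
Proof.
  intros Ha. rewrite pmatch_napps.
  apply Rmult_le_pos; [lra | now apply napps_nonneg].
Qed.

Lemma pmatch_ge (a : R) (m : nat) : 0 <= a <= 1 -> (1 <= m)%nat -> a <= pmatch a m.
Proof.
  intros Ha Hm. destruct m as [|m]; [lia|]. unfold pmatch. simpl.
  assert (Hpow : (1 - a) ^ m <= 1 ^ m) by (apply pow_incr; lra).
  rewrite pow1 in Hpow.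
  nra.
Qed.

Lemma sum_f_R0_nonneg (f : nat -> R) (N : nat) :
  (forall k, (k <= N)%nat -> 0 <= f k) -> 0 <= sum_f_R0 f N.
Proof.
  intros Hf. apply Rle_trans with (sum_f_R0 (fun _ => 0) N).
  - rewrite sum_cte. lra.
  - now apply sum_Rle.
Qed.

Lemma mixed_mean_ge_best_response (K : nat) (x f : nat -> R) (k' : nat) :
  mixed K x -> (k' <= K)%nat ->
  (forall k, (k <= K)%nat -> 0 < x k -> forall k2, (k2 <= K)%nat -> f k2 <= f k) ->
  f k' <= sumK K (fun k => x k * f k).
Proof.
  intros [Hx Hsum] Hk' Hbest. unfold sumK in *.
  apply Rle_trans with (f k' * sum_f_R0 x K); [rewrite Hsum; lra|].
  rewrite scal_sum. apply sum_Rle. intros k Hk.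
  destruct (Hx k Hk) as [Hpos|Hzero].
  - specialize (Hbest k Hk Hpos k' Hk'). nra.
  - rewrite <- Hzero. lra.
Qed.

Lemma mul_exp_neg_le (t : R) : t * exp (- t) <= 1 - exp (- t).
Proof.
  pose proof (exp_ineq1_le t). pose proof (exp_pos (- t)).
  assert (exp t * exp (- t) = 1) by (rewrite <- exp_plus, Rplus_opp_r; apply exp_0).
  nra.
Qed.

(* [a * l] applications accepted out of a load [l] fill the fraction
   [1 - exp (- l)] of [B] available hospitals. *)
Lemma fixed_point_acceptance_ge (a l B : R) :
  0 <= l -> 0 <= B -> a * l = B * (1 - exp (- l)) -> (l = 0 -> a = B) ->
  B * exp (- l) <= a.
Proof.
  intros [Hl|Hl] HB Hfill Hzero.
  - apply Rmult_le_reg_r with l; [exact Hl|].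
    pose proof (mul_exp_neg_le l). nra.
  - subst l. rewrite Hzero by reflexivity. rewrite Ropp_0, exp_0. lra.
Qed.

Section Equilibrium.

Variables (K : nat) (r v : R) (x y : nat -> R) (aHH aHL aLH aLL : R).
Hypotheses (Hx : mixed K x) (Hy : mixed K y).
Hypotheses (HaHH : 0 <= aHH <= 1) (HaHL : 0 <= aHL <= 1)
           (HaLH : 0 <= aLH <= 1) (HaLL : 0 <= aLL <= 1).

Lemma high_doctors_value_eq :
  v * MHH K x aHH + 1 * MHL K x aHH aHL = sumK K (fun k => x k * utilH K v aHH aHL k).
Proof.
  unfold MHH, MHL, utilH, sumK. rewrite !scal_sum, <- sum_plus.
  apply sum_eq. intros. ring.
Qed.

Lemma low_doctors_value_eq :
  v * MLH K r y aLH + 1 * MLL K r y aLH aLL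
  = r * sumK K (fun k => y k * utilL K v aLH aLL k).
Proof.
  unfold MLH, MLL, utilL, sumK. rewrite !scal_sum, <- sum_plus.
  apply sum_eq. intros. ring.
Qed.

Lemma MHH_eq : MHH K x aHH = aHH * lamHH K x aHH.
Proof.
  unfold MHH, lamHH, pHH, sumK. rewrite scal_sum.
  apply sum_eq. intros. rewrite pmatch_napps. ring.
Qed.

Lemma MLL_eq : r <> 0 -> MLL K r y aLH aLL = r * (aLL * muL K r y aLH aLL).
Proof.
  intros Hr.
  assert (Hmu : muL K r y aLH aLL
                = sumK K (fun k => y k * ((1 - aLH) ^ k * napps aLL (K - k))))
    by (unfold muL; field; exact Hr).
  rewrite Hmu. unfold MLL, pLL, sumK. rewrite (scal_sum _ _ aLL).
  f_equal. apply sum_eq. intros. rewrite pmatch_napps. ring.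
Qed.

Lemma lamHH_nonneg : 0 <= lamHH K x aHH.
Proof.
  destruct Hx as [Hx0 _]. apply sum_f_R0_nonneg. intros k Hk.
  apply Rmult_le_pos; [now apply Hx0 | now apply napps_nonneg].
Qed.

Lemma muL_nonneg : 0 < r -> 0 <= muL K r y aLH aLL.
Proof.
  intros Hr. destruct Hy as [Hy0 _]. unfold muL.
  apply Rmult_le_pos; [apply Rmult_le_pos; [lra|] | left; now apply Rinv_0_lt_compat].
  apply sum_f_R0_nonneg. intros k Hk.
  apply Rmult_le_pos; [now apply Hy0|].
  apply Rmult_le_pos; [apply pow_le; lra | now apply napps_nonneg].
Qed.

Lemma MHL_nonneg : 0 <= MHL K x aHH aHL.
Proof.
  destruct Hx as [Hx0 _]. apply sum_f_R0_nonneg. intros k Hk.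
  apply Rmult_le_pos; [now apply Hx0|].
  apply Rmult_le_pos; [apply pow_le; lra | now apply pmatch_nonneg].
Qed.

Lemma MLH_nonneg : 0 < r -> 0 <= MLH K r y aLH.
Proof.
  intros Hr. destruct Hy as [Hy0 _]. apply Rmult_le_pos; [lra|].
  apply sum_f_R0_nonneg. intros k Hk.
  apply Rmult_le_pos; [now apply Hy0 | now apply pmatch_nonneg].
Qed.

Lemma utilH_high_only_ge : (1 <= K)%nat -> 0 <= v -> v * aHH <= utilH K v aHH aHL K.
Proof.
  intros HK Hv. unfold utilH, pHH, pHL.
  pose proof (pmatch_ge aHH K HaHH HK).
  pose proof (pmatch_nonneg aHL (K - K) HaHL).
  pose proof (pow_le (1 - aHH) K ltac:(lra)).
  nra.
Qed.

Lemma utilL_low_only_ge : (1 <= K)%nat -> aLL <= utilL K v aLH aLL 0.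
Proof.
  intros HK. unfold utilL, pLH, pLL. rewrite Nat.sub_0_r.
  pose proof (pmatch_ge aLL K HaLL HK).
  unfold pmatch at 1. simpl. lra.
Qed.

Lemma high_doctors_value_ge :
  (1 <= K)%nat -> 0 <= v ->
  MHH K x aHH = 1 - exp (- lamHH K x aHH) -> (lamHH K x aHH = 0 -> aHH = 1) ->
  (forall k, (k <= K)%nat -> 0 < x k ->
     forall k', (k' <= K)%nat -> utilH K v aHH aHL k' <= utilH K v aHH aHL k) ->
  v * exp (- lamHH K x aHH) <= v * MHH K x aHH + 1 * MHL K x aHH aHL.
Proof.
  intros HK Hv Hfill Hzero Hbest.
  assert (Hacc : 1 * exp (- lamHH K x aHH) <= aHH).
  { apply fixed_point_acceptance_ge; [apply lamHH_nonneg | lra | | exact Hzero].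
    rewrite <- MHH_eq, Hfill. ring. }
  rewrite high_doctors_value_eq.
  apply Rle_trans with (v * aHH); [apply Rmult_le_compat_l; lra|].
  apply Rle_trans with (utilH K v aHH aHL K); [now apply utilH_high_only_ge|].
  now apply mixed_mean_ge_best_response.
Qed.

Lemma low_doctors_value_ge :
  (1 <= K)%nat -> 0 < r ->
  MLL K r y aLH aLL
  = r * (exp (- lamHL K r x aHH aHL) * (1 - exp (- muL K r y aLH aLL))) ->
  (muL K r y aLH aLL = 0 -> aLL = exp (- lamHL K r x aHH aHL)) ->
  (forall k, (k <= K)%nat -> 0 < y k ->
     forall k', (k' <= K)%nat -> utilL K v aLH aLL k' <= utilL K v aLH aLL k) ->
  r * (exp (- lamHL K r x aHH aHL) * exp (- muL K r y aLH aLL))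
  <= v * MLH K r y aLH + 1 * MLL K r y aLH aLL.
Proof.
  intros HK Hr Hfill Hzero Hbest.
  assert (Hacc : exp (- lamHL K r x aHH aHL) * exp (- muL K r y aLH aLL) <= aLL).
  { apply fixed_point_acceptance_ge;
      [now apply muL_nonneg | left; apply exp_pos | | exact Hzero].
    apply Rmult_eq_reg_l with r; [|lra].
    rewrite <- MLL_eq, Hfill by lra. ring. }
  rewrite low_doctors_value_eq. apply Rmult_le_compat_l; [lra|].
  apply Rle_trans with aLL; [exact Hacc|].
  apply Rle_trans with (utilL K v aLH aLL 0); [now apply utilL_low_only_ge|].
  apply mixed_mean_ge_best_response; [exact Hy | lia | exact Hbest].
Qed.

End Equilibrium.

Theorem theorem2 :
  forall (K : nat) (r v : R),
    (1 <= K)%nat -> 0 < r -> 1 < v -> exp 1 / (exp 1 - 1) <= v ->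
    forall (x y : nat -> R) (aHH aHL aLH aLL : R),
      sym_equilibrium K r v x y aHH aHL aLH aLL ->
      optimum r v / 2 <= social_welfare K r v x y aHH aHL aLH aLL.
Proof.
  (* The bound only needs [1 <= v]. *)
  intros K r v HK Hr Hv _ x y aHH aHL aLH aLL Heq.
  destruct Heq as (Hx & Hy & Hfp & HbestH & HbestL).
  destruct Hfp as ((HaHH & HaHL & HaLH & HaLL) & (EHH & EHL & _ & ELL) & (ZHH & _ & _ & ZLL)).
  pose proof (high_doctors_value_ge K v x aHH aHL Hx HaHH HaHL HK ltac:(lra) EHH ZHH HbestH).
  pose proof (low_doctors_value_ge K r v x y aHH aHL aLH aLL Hy HaLH HaLL HK Hr ELL ZLL HbestL).
  pose proof (MHL_nonneg K x aHH aHL Hx HaHH HaHL).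
  pose proof (MLH_nonneg K r y aLH Hy HaLH Hr).
  unfold social_welfare, doctors_welfare, hospitals_welfare, optimum.
  set (eHH := exp (- lamHH K x aHH)) in *.
  set (eHL := exp (- lamHL K r x aHH aHL)) in *.
  set (eLL := exp (- muL K r y aLH aLL)) in *.
  nra.
Qed.
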